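(* Let $A$, $B$, $C$ be deterministic parity tree automata over the same finite alphabet with pairwise disjoint state sets, and let $p$ be a state of $C$. If $L(A)\le_W L(B)$, then $L(C_{p:=A})\le_W L(C_{p:=B})$.
   Context: Deterministic parity tree automata have a total transition function $\delta:Q\times\Sigma\to Q\times Q$; a transition $q\xrightarrow{\sigma}q_1,q_2$ has left target $q_1$ (direction 0) and right target $q_2$ (direction 1), written $q\xrightarrow{\sigma,0}q_1$, $q\xrightarrow{\sigma,1}q_2$. For a state $p$ of $C$, $C_{p:=A}$ is the automaton obtained from the disjoint union of $C$ and $A$ by redirecting every transition edge $r\xrightarrow{\sigma,d}p$ of $C$ to $r\xrightarrow{\sigma,d}q_0^A$ (where $q_0^A$ is the initial state of $A$); the initial state is that of $C$ (or $q_0^A$ if $p$ is the initial state of $C$). Acceptance: the highest rank occurring infinitely often on each path of the run is even. $\le_W$ is continuous (Wadge) reducibility. *)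

From mathcomp Require Import all_boot.
Set Implicit Arguments. Unset Strict Implicit. Unset Printing Implicit Defensive.

(* Infinite full binary trees labelled by Sigma: a node is a finite word over
   {0,1} = bool (false = direction 0 = left, true = direction 1 = right),
   listed from the root. *)
Definition tree (Sigma : Type) := seq bool -> Sigma.

Definition subtree (Sigma : Type) (t : tree Sigma) (d : bool) : tree Sigma :=
  fun w => t (d :: w).

Record dpta (Sigma : finType) := DPTA {
  state : finType;
  init : state;
  delta : state -> Sigma -> state * state;
  rank : state -> nat }.

Definition dir_target (S : Type) (pr : S * S) (d : bool) : S :=
  if d then pr.2 else pr.1.

Fixpoint state_at (Sigma : finType) (A : dpta Sigma) (q : state A)
    (t : tree Sigma) (v : seq bool) : state A :=
  match v with
  | [::] => q
  | d :: v' => state_at (dir_target (delta q (t [::])) d) (subtree t d) v'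
  end.

Definition run (Sigma : finType) (A : dpta Sigma) (t : tree Sigma) (v : seq bool)
  : state A := state_at (init A) t v.

Definition path_node (pi : nat -> bool) (n : nat) : seq bool := mkseq pi n.

Definition parity_ok (r : nat -> nat) : Prop :=
  exists m, ~~ odd m /\
    (forall N, exists n, N <= n /\ r n = m) /\
    (exists N, forall n, N <= n -> r n <= m).

Definition accepts (Sigma : finType) (A : dpta Sigma) (t : tree Sigma) : Prop :=
  forall pi : nat -> bool,
    parity_ok (fun n => rank (run A t (path_node pi n))).

Definition lang (Sigma : finType) (A : dpta Sigma) : tree Sigma -> Prop :=
  fun t => accepts A t.

Definition agree_upto (Sigma : Type) (n : nat) (t t' : tree Sigma) : Prop :=
  forall v : seq bool, size v < n -> t v = t' v.

Definition continuous_tree (Sigma Gamma : Type) (f : tree Sigma -> tree Gamma) : Prop :=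
  forall t n, exists m, forall t', agree_upto m t t' -> agree_upto n (f t) (f t').

Definition wadge_le (Sigma Gamma : Type) (L : tree Sigma -> Prop) (M : tree Gamma -> Prop)
  : Prop :=
  exists f, continuous_tree f /\ forall t, L t <-> M (f t).

(* C_{p:=A}: disjoint union of C and A (as a sum type), with every edge of C
   into p redirected to the initial state of A. *)
Section Subst.
Variables (Sigma : finType) (C : dpta Sigma) (p : state C) (A : dpta Sigma).

Definition subst_state : finType := (state C + state A)%type.

Definition redir (q : state C) : subst_state :=
  if q == p then inr (init A) else inl q.

Definition subst_init : subst_state := redir (init C).

Definition subst_delta (s : subst_state) (a : Sigma) : subst_state * subst_state :=
  match s with
  | inl r => (redir (delta r a).1, redir (delta r a).2)
  | inr q => (inr (delta q a).1, inr (delta q a).2)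
  end.

Definition subst_rank (s : subst_state) : nat :=
  match s with inl r => rank r | inr q => rank q end.

Definition subst : dpta Sigma := DPTA subst_init subst_delta subst_rank.
End Subst.

(* Let f be a continuous reduction of L(A) to L(B).  The reduction of
   L(C_{p:=A}) to L(C_{p:=B}) is the map  graft f : t |-> t'  which copies t
   as long as the run of C on t has not yet visited p, and replaces every
   subtree t|u at which the run enters p by f(t|u).  Along any path pi, the runs of C_{p:=A} on t and of C_{p:=B} on t'
   either stay in C in lockstep (so the ranks seen along pi coincide), or both
   enter the second component at the same node u; from there on the parity
   condition on pi only depends on the run of A on t|u (resp. of B on
   t'|u = f(t|u)) along the rest of pi, and acceptance of all paths of t by
   C_{p:=A} implies acceptance of t|u by A.  Since t|u is in L(A) iff f(t|u)
   is in L(B), acceptance is transferred in both directions. *)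
From Stdlib Require Import Classical FunctionalExtensionality.
From mathcomp Require Import all_boot.
Set Implicit Arguments. Unset Strict Implicit. Unset Printing Implicit Defensive.

Definition subtree_at (Sigma : Type) (t : tree Sigma) (u : seq bool) : tree Sigma :=
  fun w => t (u ++ w).

Lemma subtree_at_cons (Sigma : Type) (t : tree Sigma) d u :
  subtree_at t (d :: u) = subtree_at (subtree t d) u.
Proof. by []. Qed.

Definition shift_path (pi : nat -> bool) (k : nat) : nat -> bool :=
  fun i => pi (k + i).

Definition prepend (u : seq bool) (pi : nat -> bool) : nat -> bool :=
  fun i => if i < size u then nth false u i else pi (i - size u).

Lemma path_node_shift pi k n :
  path_node pi (k + n) = path_node pi k ++ path_node (shift_path pi k) n.
Proof.
rewrite /path_node /mkseq iotaD map_cat add0n; congr (_ ++ _).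
by rewrite -(addn0 k) iotaDl -map_comp addn0.
Qed.

Lemma path_node_prefix pi n u w :
  path_node pi n = u ++ w -> path_node pi (size u) = u.
Proof.
move=> node_eq; have n_eq : n = size u + size w.
  by rewrite -size_cat -node_eq size_mkseq.
move: node_eq; rewrite n_eq path_node_shift => /eqP.
by rewrite eqseq_cat ?size_mkseq // => /andP [/eqP].
Qed.

Lemma prepend_node u pi : path_node (prepend u pi) (size u) = u.
Proof.
rewrite /path_node -[RHS](mkseq_nth false u) /mkseq.
by apply/eq_in_map => i; rewrite mem_iota add0n /prepend => /= ->.
Qed.

Lemma prepend_shift u pi : shift_path (prepend u pi) (size u) =1 pi.
Proof. by move=> i; rewrite /shift_path /prepend ltnNge leq_addr /= addKn. Qed.

Lemma parity_eq r1 r2 : r1 =1 r2 -> parity_ok r1 -> parity_ok r2.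
Proof. by move=> /functional_extensionality ->. Qed.

Lemma parity_shift r k : parity_ok r <-> parity_ok (fun n => r (k + n)).
Proof.
split=> -[m [m_even [m_inf [N m_max]]]]; exists m; split=> //; split.
- move=> M; have [n [le_kM_n rn]] := m_inf (k + M).
  have le_kn : k <= n by apply: leq_trans le_kM_n; apply: leq_addr.
  by exists (n - k); rewrite subnKC // leq_subRL.
- by exists N => n le_Nn; apply: m_max; apply: leq_trans le_Nn (leq_addl _ _).
- move=> M; have [n [le_Mn rn]] := m_inf M.
  by exists (k + n); split=> //; apply: leq_trans le_Mn (leq_addl _ _).
- exists (k + N) => n le_kN_n.
  have le_kn : k <= n by apply: leq_trans le_kN_n; apply: leq_addr.
  by rewrite -(subnKC le_kn); apply: m_max; rewrite leq_subRL.
Qed.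

Lemma state_at_cat (Sigma : finType) (X : dpta Sigma) (s : state X) t u w :
  state_at s t (u ++ w) = state_at (state_at s t u) (subtree_at t u) w.
Proof. by elim: u s t => [//|d u IH] s t /=; rewrite IH. Qed.

Section Substitution.
Variables (Sigma : finType) (C : dpta Sigma) (p : state C).

Lemma state_at_inr (X : dpta Sigma) (q : state X) t w :
  @state_at _ (subst p X) (inr q) t w = inr (state_at q t w).
Proof. by elim: w q t => [//|d w IH] q t /=; case: d; rewrite IH. Qed.

Lemma parity_after_entry (X : dpta Sigma) t pi k :
  run (subst p X) t (path_node pi k) = inr (init X) ->
  parity_ok (fun n => rank (run (subst p X) t (path_node pi n))) <->
  parity_ok (fun n => rank (run X (subtree_at t (path_node pi k))
                                   (path_node (shift_path pi k) n))).
Proof.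
move=> entry; rewrite (parity_shift _ k).
have ranks_eq n : rank (run (subst p X) t (path_node pi (k + n))) =
    rank (run X (subtree_at t (path_node pi k)) (path_node (shift_path pi k) n)).
  by rewrite /run path_node_shift state_at_cat -/(run _ _ _) entry state_at_inr.
by split; apply: parity_eq.
Qed.

(* If C_{p:=X} accepts t, then X accepts every subtree at which the run
   enters X: a path of the subtree extends to a path of t through its root. *)
Lemma accepts_after_entry (X : dpta Sigma) t u :
  accepts (subst p X) t -> run (subst p X) t u = inr (init X) ->
  accepts X (subtree_at t u).
Proof.
move=> acc entry pi.
have := acc (prepend u pi).
rewrite (@parity_after_entry _ _ _ (size u)) prepend_node //.
by apply: parity_eq => n; rewrite /path_node (eq_mkseq (prepend_shift u pi)).
Qed.

Lemma accepts_transfer (X Y : dpta Sigma) t t' :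
  (forall pi,
     (forall n, rank (run (subst p X) t (path_node pi n)) =
                rank (run (subst p Y) t' (path_node pi n))) \/
     exists k, run (subst p X) t (path_node pi k) = inr (init X) /\
               run (subst p Y) t' (path_node pi k) = inr (init Y) /\
               (accepts X (subtree_at t (path_node pi k)) ->
                accepts Y (subtree_at t' (path_node pi k)))) ->
  accepts (subst p X) t -> accepts (subst p Y) t'.
Proof.
move=> sync acc pi; case: (sync pi) => [same_ranks | [k [entryX [entryY transfer]]]].
  exact: parity_eq (acc pi).
apply/(parity_after_entry entryY).
exact: transfer (accepts_after_entry acc entryX) (shift_path pi k).
Qed.

End Substitution.

Lemma agree_subtree (T : Type) m (t t' : tree T) d :
  agree_upto m.+1 t t' -> agree_upto m (subtree t d) (subtree t' d).
Proof. by move=> agree v lt_vm; apply: (agree (d :: v)). Qed.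

Lemma agree_mono (T : Type) m m' (t t' : tree T) :
  m <= m' -> agree_upto m' t t' -> agree_upto m t t'.
Proof. by move=> le_mm' agree v lt_vm; apply: agree; apply: leq_trans le_mm'. Qed.

Section Graft.
Variables (Sigma : finType) (C : dpta Sigma) (p : state C)
  (f : tree Sigma -> tree Sigma).

Fixpoint graft (q : state C) (t : tree Sigma) (v : seq bool) {struct v} : Sigma :=
  if q == p then f t v else
  match v with
  | [::] => t [::]
  | d :: v' => graft (dir_target (delta q (t [::])) d) (subtree t d) v'
  end.

Lemma graft_at_p t : graft p t = f t.
Proof. by apply: functional_extensionality => -[|d v] /=; rewrite eqxx. Qed.

Lemma graft_root q t : q != p -> graft q t [::] = t [::].
Proof. by move=> /negbTE /= ->. Qed.

Lemma graft_subtree q t d : q != p ->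
  subtree (graft q t) d = graft (dir_target (delta q (t [::])) d) (subtree t d).
Proof.
by move=> /negbTE q_neq; apply: functional_extensionality => v; rewrite /subtree /= q_neq.
Qed.

Lemma graft_continuous q : continuous_tree f -> continuous_tree (graft q).
Proof.
move=> f_cont t n; elim: n q t => [|n IH] q t; first by exists 0 => t' _ v.
case: (eqVneq q p) => [->|q_neq].
  by have [m f_m] := f_cont t n.+1; exists m => t'; rewrite !graft_at_p; apply: f_m.
have [m0 agree0] := IH (dir_target (delta q (t [::])) false) (subtree t false).
have [m1 agree1] := IH (dir_target (delta q (t [::])) true) (subtree t true).
exists (maxn m0 m1).+1 => t' agree [|d v] lt_vn.
  by rewrite !graft_root //; apply: agree.
have root_eq : t [::] = t' [::] by apply: agree.
change (subtree (graft q t) d v = subtree (graft q t') d v).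
rewrite !graft_subtree // -root_eq.
case: d lt_vn => lt_vn; [apply: agree1 | apply: agree0] => //;
  apply: agree_mono (agree_subtree _ agree); [exact: leq_maxr | exact: leq_maxl].
Qed.

Variables (A B : dpta Sigma).

Lemma graft_sync q t v :
  (exists r, @state_at _ (subst p A) (redir p A q) t v = inl r /\
             @state_at _ (subst p B) (redir p B q) (graft q t) v = inl r) \/
  (exists u w, v = u ++ w /\
     @state_at _ (subst p A) (redir p A q) t u = inr (init A) /\
     @state_at _ (subst p B) (redir p B q) (graft q t) u = inr (init B) /\
     subtree_at (graft q t) u = f (subtree_at t u)).
Proof.
elim: v q t => [|d v IH] q t; have [->|q_neq] := eqVneq q p.
- by right; exists [::], [::]; rewrite /= /redir eqxx graft_at_p; do !split.
- by left; exists q; rewrite /redir (negbTE q_neq).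
- by right; exists [::], (d :: v); rewrite /= /redir eqxx graft_at_p; do !split.
have redir_q X : redir p X q = inl q by rewrite /redir (negbTE q_neq).
have step X (x : state C * state C) :
    dir_target (redir p X x.1, redir p X x.2) d = redir p X (dir_target x d).
  by case: d.
case: (IH (dir_target (delta q (t [::])) d) (subtree t d)) =>
  [same | [u [w [-> entries]]]].
  by left; rewrite /= !redir_q /= (negbTE q_neq) !step graft_subtree.
right; exists (d :: u), w.
by rewrite /= !redir_q /= (negbTE q_neq) !step !subtree_at_cons graft_subtree.
Qed.

(* The dichotomy is
   classical: whether the run ever reaches p along pi need not be decidable. *)
Lemma graft_path_sync t pi :
  (forall n, exists r,
     run (subst p A) t (path_node pi n) = inl r /\
     run (subst p B) (graft (init C) t) (path_node pi n) = inl r) \/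
  exists k,
    run (subst p A) t (path_node pi k) = inr (init A) /\
    run (subst p B) (graft (init C) t) (path_node pi k) = inr (init B) /\
    subtree_at (graft (init C) t) (path_node pi k) =
      f (subtree_at t (path_node pi k)).
Proof.
apply: NNPP => neither; apply: (neither); left=> n.
have [same | [u [w [node_eq entries]]]] := graft_sync (init C) t (path_node pi n).
  exact: same.
by case: neither; right; exists (size u); rewrite (path_node_prefix node_eq).
Qed.

End Graft.

Theorem lemma5p5 (Sigma : finType) (A B C : dpta Sigma) (p : state C) :
  wadge_le (lang A) (lang B) ->
  wadge_le (lang (subst p A)) (lang (subst p B)).
Proof.
move=> [f [f_cont f_reduces]].
exists (graft p f (init C)); split; first exact: graft_continuous.
move=> t; split; apply: accepts_transfer => pi;
  case: (graft_path_sync p f A B t pi) => [same | [k [entryA [entryB graft_eq]]]].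
- by left=> n; have [r [-> ->]] := same n.
- by right; exists k; rewrite graft_eq; do !split => //; apply: (f_reduces _).1.
- by left=> n; have [r [-> ->]] := same n.
- by right; exists k; rewrite graft_eq; do !split => //; apply: (f_reduces _).2.
Qed.
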